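(* For each integer $k\ge0$ there is a polynomial $E_k(d)\in\mathbb{Q}[d]$ of degree $k$ such that $\mathbb{E}[\mathcal{X}_d^k]=E_k(d)$ for all integers $d\ge k-1$, $d\ge0$. These polynomials satisfy the formal power series identity (in $z$, for every $d$) \[ \sum_{k\ge0}\frac{E_k(d)}{k!}z^k=\Big(\frac{e^z-1}{z}\Big)^{d+2}e^{-z}. \] In particular, setting $E'_k(d)=\sum_{i=0}^k\binom{k}{i}E_i(d)\big(-\tfrac d2\big)^{k-i}$, one has for all integers $a,b\ge0$ and $k\ge0$ \[ E'_k(a+b+2)=\sum_{i+j=k}\binom{k}{i}E'_i(a)E'_j(b). \]
   Context: $\mathcal{X}_d$ is the random variable equal to the number of descents of a uniformly random permutation of $\{1,\dots,d+1\}$ (equivalently, the random variable with $\Pr(\mathcal{X}_d=k)=a_k/\sum_i a_i$ where $a_k=\dim A^k$ of the Chow ring of the Boolean matroid on $d+1$ elements, these being Eulerian numbers). *)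

From mathcomp Require Import all_boot all_order all_algebra all_fingroup.
Set Implicit Arguments. Unset Strict Implicit. Unset Printing Implicit Defensive.
Import GRing.Theory Num.Theory.
Local Open Scope ring_scope.

(* Number of descents of a permutation s of {0,...,d} (i.e. of d+1 elements):
   positions i (0 <= i < d) with s(i) > s(i+1). *)
Definition des (d : nat) (s : 'S_d.+1) : nat :=
  #|[set i : 'I_d | (s (lift ord0 i) < s (widen_ord (leqnSn d) i))%N]|.

Definition moment (d k : nat) : rat :=
  (\sum_(s : 'S_d.+1) ((des s) ^ k)%N%:R) / (d.+1)`!%:R.

Definition fps := nat -> rat.
Definition fps_mul (a b : fps) : fps :=
  fun n => \sum_(i < n.+1) a i * b (n - i)%N.
Definition fps_exp (a : fps) (m : nat) : fps := iter m (fps_mul a) (fun n => (n == 0)%:R).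
(* (e^z - 1)/z = sum_n z^n/(n+1)! *)
Definition fps_expm1_div_z : fps := fun n => (n.+1`!%:R)^-1.
Definition fps_exp_neg : fps := fun n => (-1) ^+ n / (n`!%:R).

Definition Eprime (E : nat -> {poly rat}) (k : nat) : {poly rat} :=
  \sum_(i < k.+1) ('C(k, i))%:R *: (E i * (- (2%:R)^-1 *: 'X) ^+ (k - i)).

From mathcomp Require Import all_boot all_order all_algebra all_fingroup.
From mathcomp Require Import zify ring.
Import GRing.Theory Num.Theory.
Set Implicit Arguments. Unset Strict Implicit. Unset Printing Implicit Defensive.
Local Open Scope ring_scope.

(* Inserting the largest letter into the d+2 slots of a permutation of d+1 letters with
   D descents gives D+1 permutations with D descents and d+1-D with D+1 descents.
   Summing D^k against this yields a linear recurrence for the moments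
   E[X_{d+1}^k] in terms of the E[X_d^i], i <= k+1.  With G = (e^z-1)/z, the numbers
   k! [z^k] G^{d+2} e^{-z} satisfy the same recurrence, because the series
   Phi = G^{d+2} e^{-z} solves (1 - e^z) Phi' + (1 + (d+1) e^z) Phi = (d+2) G Phi; the two
   agree at d = 0, hence for all k <= d+1.  Writing G^{d+2} = sum_j C(d+2,j) (G-1)^j, where
   (G-1)^j starts at z^j with coefficient 2^-j, shows that k! [z^k] G^{d+2} e^{-z} is a
   polynomial of degree k in d.  Finally E'_k(d) = k! [z^k] (G e^{-z/2})^{d+2}, so the
   convolution identity is the product rule for exponential generating functions. *)

(** * Descents and insertion of the maximum *)

Fixpoint descents (s : seq nat) : nat :=
  if s is x :: s' then ((head x s' < x) + descents s')%N else 0%N.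

Lemma descents_sum s :
  descents s = (\sum_(i < (size s).-1) (nth 0 s i.+1 < nth 0 s i))%N.
Proof.
elim: s => [|x [|y s] /= IH]; rewrite /= ?big_ord0 ?ltnn //.
by rewrite big_ord_recl IH.
Qed.

Lemma sum_descents_insert_max (R : comPzRingType) (F : nat -> R) m s :
  all (fun x => x < m)%N s ->
  \sum_(p < (size s).+1) F (descents (take p s ++ m :: drop p s))
  = (descents s).+1%:R * F (descents s)
    + ((size s)%:R - (descents s)%:R) * F (descents s).+1.
Proof.
elim: s F => [|x s IH] F /=.
  by rewrite ltnn big_ord1 subrr mul0r addr0 mul1r.
case/andP=> xm sm; have mx : (m < x)%N = false by rewrite ltnNge ltnW.
have [/size0nil-> | s_gt0] := posnP (size s).
  by rewrite !big_ord_recl big_ord0 /= xm mx !ltnn addr0 subr0 !mul1r addrC.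
have head_ins (i : 'I_(size s)) : head x (take i.+1 s ++ m :: drop i.+1 s) = head x s.
  by case: s i {IH sm s_gt0 mx} => [[]|].
have head_m : (head m s < m)%N by case: s {IH head_ins} sm s_gt0 => //= y s /andP[].
have := IH (fun n => F ((head x s < x) + n)%N) sm.
rewrite !big_ord_recl /= !add0n take0 drop0 /= xm mx head_m.
move=> IHs; under eq_bigr do rewrite add0n head_ins.
by case: (head x s < x)%N IHs => /= IHs; rewrite addrCA IHs ?add0n ?add1n; ring.
Qed.

Definition perm_seq n (s : 'S_n.+1) : seq nat := mkseq (fun j => val (s (inord j))) n.+1.

Lemma des_perm_seq n (s : 'S_n.+1) : des s = descents (perm_seq s).
Proof.
rewrite descents_sum size_mkseq succnK /des -sum1_card big_mkcond.
apply: eq_bigr => i _; rewrite inE.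
have -> : lift ord0 i = inord i.+1 by apply: ord_inj; rewrite lift0 inordK ?ltnS.
have -> : widen_ord (leqnSn n) i = inord i by apply: ord_inj; rewrite inordK // ltnS ltnW.
by rewrite !nth_mkseq ?ltnS ?(ltnW (ltn_ord i)) //; case: ifP.
Qed.

Lemma perm_seq_lt n (t : 'S_n.+1) : all (fun v => v < n.+1)%N (perm_seq t).
Proof. by apply/allP => _ /mapP[j _ ->]; apply: ltn_ord. Qed.

Lemma perm_seq_lift_max n (p : 'I_n.+2) (t : 'S_n.+1) :
  perm_seq (lift_perm p ord_max t) = take p (perm_seq t) ++ n.+1 :: drop p (perm_seq t).
Proof.
have p_le : (p <= size (perm_seq t))%N by rewrite size_mkseq -ltnS.
apply: (@eq_from_nth _ 0%N) => [|i].
  rewrite size_cat size_takel // [size (_ :: _)]/= size_drop !size_mkseq.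
  by have := ltn_ord p; lia.
rewrite size_mkseq => i_lt; rewrite nth_mkseq // nth_cat size_takel //.
have lift_val j : (j < n.+1)%N ->
    val (lift_perm p ord_max t (lift p (inord j))) = nth 0%N (perm_seq t) j.
  by move=> j_lt; rewrite lift_perm_lift /= /bump leqNgt ltn_ord nth_mkseq.
have inord_bump j : (j < n.+1)%N -> inord (bump p j) = lift p (inord j : 'I_n.+1).
  by move=> j_lt; apply: ord_inj; rewrite /= !inordK // /bump; case: leqP; lia.
case: ltngtP => [i_lt_p | p_lt_i | ->].
- have i_lt_n : (i < n.+1)%N by rewrite (leq_trans i_lt_p) // -ltnS.
  by rewrite nth_take // -lift_val // -inord_bump // /bump leqNgt i_lt_p.
- rewrite (_ : i - p = (i.-1 - p).+1)%N /=; last lia.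
  rewrite nth_drop (_ : p + _ = i.-1)%N; last lia.
  rewrite -lift_val; last lia.
  rewrite -inord_bump; last lia.
  by rewrite (_ : bump p i.-1 = i) // /bump; case: leqP; lia.
- by rewrite subnn inord_val lift_perm_id.
Qed.

Lemma lift_perm_max_bij n :
  bijective (fun pt : 'I_n.+2 * 'S_n.+1 => lift_perm pt.1 ord_max pt.2).
Proof.
apply: inj_card_bij => [[p t] [p' t'] /= eq_pt|]; last first.
  by rewrite card_prod !card_Sn card_ord factS.
have eq_p : p = p'.
  apply: (@perm_inj _ (lift_perm p' ord_max t')).
  by rewrite -{1}eq_pt !lift_perm_id.
rewrite -eq_p in eq_pt *; congr (_, _); apply/permP => k.
have := congr1 (fun s : 'S_n.+2 => s (lift p k)) eq_pt.
by rewrite /= !lift_perm_lift => /lift_inj.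
Qed.

Lemma sum_des_perm_lift (R : comPzRingType) (F : nat -> R) n :
  \sum_(s : 'S_n.+2) F (des s)
  = \sum_(t : 'S_n.+1) ((des t).+1%:R * F (des t) + (n.+1%:R - (des t)%:R) * F (des t).+1).
Proof.
rewrite (reindex _ (onW_bij _ (lift_perm_max_bij n))) /=.
rewrite -(pair_big xpredT xpredT (fun p t => F (des (lift_perm p ord_max t)))) exchange_big /=.
apply: eq_bigr => t _; have := sum_descents_insert_max F (perm_seq_lt t).
rewrite size_mkseq -des_perm_seq => <-.
by apply: eq_bigr => p _; rewrite des_perm_seq perm_seq_lift_max.
Qed.

(** * The recurrence for the moments *)

Definition moment_step (R : pzRingType) (x : nat -> R) (m k : nat) : R :=
  x k.+1 + x k + \sum_(i < k.+1) 'C(k, i)%:R * (m%:R * x i - x i.+1).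

Lemma moment_step_sum (R : pzRingType) (I : finType) (x : I -> nat -> R) m k :
  moment_step (fun i => \sum_j x j i) m k = \sum_j moment_step (x j) m k.
Proof.
rewrite /moment_step !big_split /= exchange_big; congr (_ + _).
apply: eq_bigr => i _; rewrite -mulr_sumr; congr (_ * _).
by rewrite sumrB mulr_sumr.
Qed.

Lemma moment_stepMr (R : comPzRingType) (x : nat -> R) c m k :
  moment_step (fun i => x i * c) m k = moment_step x m k * c.
Proof.
rewrite /moment_step !mulrDl mulr_suml; congr (_ + _).
by apply: eq_bigr => i _; ring.
Qed.

Lemma moment_step_pow (R : comPzRingType) (D m k : nat) :
  D.+1%:R * (D ^ k)%:R + (m%:R - D%:R) * (D.+1 ^ k)%:R
  = moment_step (fun i => (D ^ i)%:R) m k :> R.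
Proof.
rewrite /moment_step !natrX -natr1 exprD1n mulr_sumr.
under [in RHS]eq_bigr do rewrite !natrX.
rewrite [in LHS](eq_bigr (fun i : 'I_k.+1 => 'C(k, i)%:R * (m%:R * D%:R ^+ i - D%:R ^+ i.+1))).
  by rewrite exprS; ring.
by move=> i _; rewrite exprS -mulr_natr; ring.
Qed.

(* At k = m+1 the value x (m+1) drops out, since 'C(m+1, m) = m+1. *)
Lemma moment_step_agree (R : comPzRingType) (x y : nat -> R) m k :
  (forall j, (j <= m)%N -> x j = y j) -> (k <= m.+1)%N ->
  moment_step x m k = moment_step y m k.
Proof.
move=> xy km.
have step_red (z : nat -> R) n : moment_step z m n
    = m.+1%:R * z n + \sum_(i < n) 'C(n, i)%:R * (m%:R * z i - z i.+1).
  by rewrite /moment_step big_ord_recr /= binn -natr1; ring.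
have sum_agree (c : nat -> R) n : (n <= m)%N ->
    \sum_(i < n) c i * (m%:R * x i - x i.+1) = \sum_(i < n) c i * (m%:R * y i - y i.+1).
  move=> nm; apply: eq_bigr => i _; have im : (i < m)%N := leq_trans (ltn_ord i) nm.
  by rewrite !xy // ltnW.
case: (ltngtP k m.+1) km => // [k_le_m | ->] _; rewrite !step_red.
  by rewrite (xy k k_le_m) (sum_agree (fun i => 'C(k, i)%:R) k k_le_m).
by rewrite !big_ord_recr /= binSn (sum_agree (fun i => 'C(m.+1, i)%:R) m) // (xy m) //; ring.
Qed.

Definition des_power_sum d k : rat := \sum_(s : 'S_d.+1) ((des s) ^ k)%N%:R.

Lemma des_power_sum_step d k :
  des_power_sum d.+1 k = moment_step (des_power_sum d) d.+1 k.
Proof.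
rewrite /des_power_sum (sum_des_perm_lift (fun D => (D ^ k)%N%:R)) moment_step_sum.
by apply: eq_bigr => t _; rewrite moment_step_pow.
Qed.

Lemma moment_recurrence d k : d.+2%:R * moment d.+1 k = moment_step (moment d) d.+1 k.
Proof.
rewrite [RHS](moment_stepMr (des_power_sum d)) -des_power_sum_step /moment factS natrM.
by rewrite -/(des_power_sum d.+1 k) invfM mulrCA mulVKf // pnatr_eq0.
Qed.

Lemma moment0 k : moment 0 k = (0 ^ k)%N%:R.
Proof.
rewrite /moment (eq_bigr (fun _ => (0 ^ k)%N%:R)) => [|s _]; last first.
  by rewrite des_perm_seq /= ltnn.
by rewrite sumr_const card_Sn divr1.
Qed.

(** * Truncated power series *)

(* A power series is represented by a polynomial truncated at some order K, and an
   identity between series by the divisibility of the difference by 'X^K. *)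

Section DvdXn.
Variable F : fieldType.
Implicit Types d p q r : {poly F}.

Lemma dvdXnP K p : reflect (forall i, (i < K)%N -> p`_i = 0) ('X^K %| p).
Proof.
apply: (iffP (dvdpP _ _)) => [[q ->] i iK | p_low]; first by rewrite coefMXn iK.
exists (drop_poly K p); rewrite -[LHS](poly_take_drop K) [take_poly K p](_ : _ = 0) ?add0r //.
by apply/polyP => i; rewrite coef_take_poly coef0; case: ifP => // /p_low.
Qed.

Lemma dvdp_sub_trans d p q r : d %| p - q -> d %| q - r -> d %| p - r.
Proof. by move=> dpq dqr; rewrite -(subrKA q) dvdp_add. Qed.

Lemma dvdp_subMl d p q q' : d %| q - q' -> d %| p * q - p * q'.
Proof. by rewrite -mulrBr; apply: dvdp_mull. Qed.

Lemma dvdp_subMr d p p' q : d %| p - p' -> d %| p * q - p' * q.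
Proof. by rewrite -mulrBl; apply: dvdp_mulr. Qed.

Lemma dvdp_subMM d p p' q q' : d %| p - p' -> d %| q - q' -> d %| p * q - p' * q'.
Proof. by move=> /(dvdp_subMr q) dp /(dvdp_subMl p') dq; apply: dvdp_sub_trans dp dq. Qed.

Lemma dvdp_subXX d p q n : d %| p - q -> d %| p ^+ n - q ^+ n.
Proof. by move=> dpq; rewrite subrXX dvdp_mulr. Qed.

Lemma dvdXn_poly_sub K K' (a : nat -> F) :
  (K <= K')%N -> 'X^K %| \poly_(i < K') a i - \poly_(i < K) a i.
Proof.
move=> KK'; apply/dvdXnP => i iK.
by rewrite coefB !coef_poly iK (leq_trans iK KK') subrr.
Qed.

Lemma dvdX_coef0 p : p`_0 = 0 -> 'X %| p.
Proof. by move=> p0; rewrite -['X]subr0 -polyC0 dvdp_XsubCl rootE horner_coef0 p0. Qed.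

Lemma coef_expr_mul_lt p q j k : p`_0 = 0 -> (k < j)%N -> (p ^+ j * q)`_k = 0.
Proof. by move=> /dvdX_coef0 Xp; apply/dvdXnP/dvdp_mulr/dvdp_exp2r. Qed.

Lemma coef_expr_mul_eq p q j : p`_0 = 0 -> (p ^+ j * q)`_j = p`_1 ^+ j * q`_0.
Proof.
move=> /dvdX_coef0/divpK p_eq; set r := p %/ 'X in p_eq.
rewrite -p_eq exprMn mulrAC coefMXn ltnn subnn -horner_coef0 hornerM horner_exp.
by rewrite !horner_coef0 coefMX.
Qed.

End DvdXn.

Lemma sumr_ord_trunc (V : nmodType) m n (G : nat -> V) :
  (m <= n)%N -> (forall j, (m <= j)%N -> G j = 0) -> \sum_(j < n) G j = \sum_(j < m) G j.
Proof.
move=> mn Gm; rewrite -!(big_mkord xpredT) (big_cat_nat (leq0n m) mn) /=.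
by rewrite [X in _ + X]big1_seq ?addr0 // => j /andP[_]; rewrite mem_index_iota => /andP[/Gm].
Qed.

Lemma poly_fps_mul K a b :
  'X^K %| \poly_(i < K) fps_mul a b i - \poly_(i < K) a i * \poly_(i < K) b i.
Proof.
apply/dvdXnP => k kK; rewrite coefB coefM coef_poly kK /fps_mul -sumrB big1 // => i _.
by rewrite !coef_poly !(leq_ltn_trans _ kK) ?leq_subr ?leq_ord // subrr.
Qed.

Lemma poly_fps_exp K a m :
  'X^K %| \poly_(i < K) fps_exp a m i - (\poly_(i < K) a i) ^+ m.
Proof.
elim: m => [|m IH].
  by apply/dvdXnP => k kK; rewrite coefB coef_poly kK coef1 subrr.
by rewrite exprS; apply: dvdp_sub_trans (poly_fps_mul _ _ _) (dvdp_subMl _ IH).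
Qed.

Section TruncatedExp.
Variables (F : numFieldType) (K : nat).
Implicit Types (p q : {poly F}) (a b c : F).

Lemma natr_fact_neq0 n : n`!%:R != 0 :> F.
Proof. by rewrite pnatr_eq0 -lt0n fact_gt0. Qed.

Lemma natr_bin i j : (j <= i)%N -> 'C(i, j)%:R = i`!%:R / (j`!%:R * (i - j)`!%:R) :> F.
Proof.
by move=> ji; rewrite -(bin_fact ji) !natrM mulfK // mulf_neq0 ?natr_fact_neq0.
Qed.

Definition egf_coef p k := k`!%:R * p`_k.

Lemma egf_coef_inj p q k : egf_coef p k = egf_coef q k -> p`_k = q`_k.
Proof. exact/mulfI/natr_fact_neq0. Qed.

Lemma egf_coefM p q k :
  egf_coef (p * q) k = \sum_(i < k.+1) 'C(k, i)%:R * egf_coef p i * egf_coef q (k - i).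
Proof.
rewrite /egf_coef coefM mulr_sumr; apply: eq_bigr => -[i /= ik] _.
by rewrite natr_bin //; field; rewrite !natr_fact_neq0.
Qed.

Lemma egf_coef_deriv p k : egf_coef p^`() k = egf_coef p k.+1.
Proof. by rewrite /egf_coef coef_deriv factS natrM -mulr_natr; ring. Qed.

Definition texp c : {poly F} := \poly_(i < K) (c ^+ i / i`!%:R).

Lemma egf_coef_texp c k : (k < K)%N -> egf_coef (texp c) k = c ^+ k.
Proof. by move=> kK; rewrite /egf_coef coef_poly kK mulrC mulfVK ?natr_fact_neq0. Qed.

Lemma egf_coef_mul_texp c p k : (k < K)%N ->
  egf_coef (p * texp c) k = \sum_(i < k.+1) 'C(k, i)%:R * egf_coef p i * c ^+ (k - i).
Proof.
move=> kK; rewrite egf_coefM; apply: eq_bigr => i _.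
by rewrite egf_coef_texp // (leq_ltn_trans (leq_subr _ _) kK).
Qed.

Lemma texpD a b : 'X^K %| texp a * texp b - texp (a + b).
Proof.
apply/dvdXnP => k kK; apply/eqP; rewrite coefB subr_eq0; apply/eqP/egf_coef_inj.
rewrite egf_coef_mul_texp // egf_coef_texp // addrC exprDn.
apply: eq_bigr => i _; rewrite egf_coef_texp ?(leq_ltn_trans (leq_ord i) kK) //.
by rewrite -mulr_natl; ring.
Qed.

Lemma texp0 : 'X^K %| texp 0 - 1.
Proof.
apply/dvdXnP => k kK; rewrite coefB coef_poly kK coef1 expr0n.
by case: k {kK} => [|k]; rewrite ?fact0 ?divr1 ?mul0r subrr.
Qed.

Lemma texpMn a n : 'X^K %| texp a ^+ n - texp (n%:R * a).
Proof.
elim: n => [|n IH]; first by rewrite mul0r expr0 -dvdpNr opprB texp0.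
rewrite exprS; apply: dvdp_sub_trans (dvdp_subMl _ IH) _.
by rewrite (_ : n.+1%:R * a = a + n%:R * a) ?texpD // -natr1; ring.
Qed.

Lemma deriv_texp c : 'X^(K.-1) %| (texp c)^`() - c *: texp c.
Proof.
apply/dvdXnP => k; rewrite ltn_predRL => kK.
rewrite coefB coef_deriv coefZ !coef_poly kK ltnW //.
rewrite factS natrM -[(_ / _) *+ _]mulr_natr.
apply/eqP; rewrite subr_eq0; apply/eqP; rewrite exprS.
by field; rewrite natr_fact_neq0 nat1r pnatr_eq0.
Qed.

End TruncatedExp.

(** * The moment generating function *)

Definition texpm1_div K : {poly rat} := \poly_(i < K) fps_expm1_div_z i.

Lemma coef0_texpm1_div K : (0 < K)%N -> (texpm1_div K)`_0 = 1.
Proof. by move=> K_gt0; rewrite coef_poly K_gt0 /fps_expm1_div_z invr1. Qed.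

Lemma texpm1_div_mulX K : 'X^K %| 'X * texpm1_div K - (texp K 1 - 1).
Proof.
apply/dvdXnP => -[|k] kK; rewrite coefB coefXM coefB coef1 !coef_poly kK /=.
  by rewrite expr0 fact0 divr1 !subrr.
by rewrite ltnW // expr1n subr0 /fps_expm1_div_z mul1r subrr.
Qed.

Lemma texpm1_div_deriv K :
  'X^K %| 'X * (texpm1_div K)^`() - (texp K 1 - texpm1_div K).
Proof.
apply/dvdXnP => -[|k] kK; rewrite coefB coefXM coefB coef_deriv !coef_poly kK /=.
  by rewrite expr0 /fps_expm1_div_z fact0 invr1 divr1 !subrr.
rewrite expr1n mul1r /fps_expm1_div_z -[_^-1 *+ _]mulr_natr factS natrM.
apply/eqP; rewrite subr_eq0; apply/eqP.
by field; rewrite natr_fact_neq0 -natrD pnatr_eq0.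
Qed.

Lemma egf_coef_step K m (p : {poly rat}) k : (k < K)%N ->
  egf_coef ((1 - texp K 1) * p^`() + (1 + m%:R * texp K 1) * p) k
  = moment_step (egf_coef p) m k.
Proof.
move=> kK; set e := texp K 1.
have -> : egf_coef ((1 - e) * p^`() + (1 + m%:R * e) * p) k
    = egf_coef p^`() k - egf_coef (p^`() * e) k + egf_coef p k + m%:R * egf_coef (p * e) k.
  rewrite (_ : (1 - e) * _ + _ = p^`() - p^`() * e + p + (p * e) *+ m).
    by rewrite /egf_coef !coefD coefN coefMn -mulr_natl; ring.
  by rewrite -mulr_natl; ring.
rewrite !egf_coef_mul_texp // egf_coef_deriv /moment_step.
under eq_bigr do rewrite egf_coef_deriv expr1n mulr1.
under [in X in _ + X = _]eq_bigr do rewrite expr1n mulr1.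
rewrite [in RHS](_ : \sum_(i < k.+1) _ = m%:R * \sum_(i < k.+1) 'C(k, i)%:R * egf_coef p i
                                       - \sum_(i < k.+1) 'C(k, i)%:R * egf_coef p i.+1).
  by ring.
by rewrite mulr_sumr -sumrB; apply: eq_bigr => i _; ring.
Qed.

Definition moment_gf K d : {poly rat} := texpm1_div K ^+ d.+2 * texp K (-1).

Lemma moment_gf_ode K d :
  'X^(K.-1) %| (1 - texp K 1) * (moment_gf K d)^`()
               + (1 + d.+1%:R * texp K 1) * moment_gf K d - d.+2%:R * moment_gf K d.+1.
Proof.
set g := texpm1_div K; set e : {poly rat} := texp K 1; set em : {poly rat} := texp K (-1).
have lowerK (p : {poly rat}) : 'X^K %| p -> 'X^(K.-1) %| p.
  by apply/dvdp_trans/dvdp_exp2l/leq_pred.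
have em_ode : 'X^(K.-1) %| em^`() + em.
  by have := deriv_texp K (-1 : rat); rewrite scaleN1r opprK.
(* The difference is a combination of the equations for z G, z G' and (e^{-z})'. *)
rewrite /moment_gf -/g -/em; set P := (g ^+ d.+2 * em)^`().
rewrite (_ : _ - _ = (P + g ^+ d.+2 * em) * ('X * g - (e - 1))
                    - d.+2%:R * (g ^+ d.+2 * em) * ('X * g^`() - (e - g))
                    - 'X * g ^+ d.+3 * (em^`() + em)); last first.
  by rewrite /P derivM deriv_exp /= !exprS; ring.
rewrite !dvdp_sub ?dvdp_mull //; apply/lowerK.
  exact: texpm1_div_mulX.
exact: texpm1_div_deriv.
Qed.

Lemma moment_gf_step K d k : (k.+2 < K)%N ->
  d.+2%:R * egf_coef (moment_gf K d.+1) k = moment_step (egf_coef (moment_gf K d)) d.+1 k.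
Proof.
move=> kK; rewrite -(egf_coef_step (K := K)); last by rewrite ltnW // ltnW.
have /dvdXnP/(_ k) := moment_gf_ode K d; rewrite ltn_predRL => /(_ (ltnW kK)) /eqP.
rewrite coefB subr_eq0 => /eqP coef_eq.
by rewrite /egf_coef coef_eq -polyC_natr coefCM mulrCA.
Qed.

(** * The polynomials E_k *)

Section BinomialPolynomial.
Variable F : numFieldType.

Lemma natr_ffact n j : (n ^_ j)%:R = \prod_(0 <= i < j) (n%:R - i%:R) :> F.
Proof.
elim: j => [|j IH]; first by rewrite big_geq.
rewrite ffactnSr natrM big_nat_recr //= IH.
have [jn | nj] := leqP j n; first by rewrite natrB.
by rewrite -IH ffact_small // !mul0r.
Qed.

Definition binpoly m j : {poly F} :=
  (j`!%:R)^-1 *: \prod_(0 <= i < j) ('X - (i%:R - m%:R)%:P).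

Lemma binpoly_nat m j n : (binpoly m j).[n%:R] = 'C(n + m, j)%:R.
Proof.
rewrite hornerZ horner_prod (eq_bigr (fun i => (n + m)%:R - i%:R)).
  by rewrite -natr_ffact -bin_ffact natrM mulrC mulfK ?natr_fact_neq0.
by move=> i _; rewrite hornerXsubC natrD; ring.
Qed.

Lemma size_binpoly m j : size (binpoly m j) = j.+1.
Proof.
by rewrite size_scale ?invr_eq0 ?natr_fact_neq0 // size_prod_XsubC size_iota subn0.
Qed.

End BinomialPolynomial.
Arguments binpoly {F} m j.

(* E_k(d) = k! [z^k] G^{d+2} e^{-z} with G^{d+2} = sum_j C(d+2, j) (G - 1)^j; only j <= k
   contributes, and C(d+2, j) is the polynomial [binpoly 2 j] evaluated at d. *)
Definition Epoly k : {poly rat} :=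
  k`!%:R *: \sum_(j < k.+1) ((texpm1_div k.+1 - 1) ^+ j * texp k.+1 (-1))`_k *: binpoly 2 j.

Lemma egf_coef_moment_gf K d k : (k < K)%N ->
  egf_coef (moment_gf K d) k
  = k`!%:R * \sum_(j < k.+1) 'C(d.+2, j)%:R * ((texpm1_div K - 1) ^+ j * texp K (-1))`_k.
Proof.
move=> kK; set h := texpm1_div K - 1.
have h0 : h`_0 = 0 by rewrite coefB coef1 coef0_texpm1_div ?subrr // (leq_ltn_trans _ kK).
rewrite /egf_coef /moment_gf -[texpm1_div K](subrK 1) -/h exprD1n mulr_suml coef_sum.
congr (_ * _); pose G j := 'C(d.+2, j)%:R * (h ^+ j * texp K (-1))`_k.
have G_vanish j : (minn d.+3 k.+1 <= j)%N -> G j = 0.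
  rewrite geq_min => /orP[dj | kj]; first by rewrite /G bin_small ?mul0r.
  by rewrite /G coef_expr_mul_lt ?mulr0.
rewrite (sumr_ord_trunc (geq_minr _ _) G_vanish) -(sumr_ord_trunc (geq_minl _ _) G_vanish).
by apply: eq_bigr => j _; rewrite /G mulrnAl coefMn mulr_natl.
Qed.

Lemma Epoly_nat K k d : (k < K)%N -> (Epoly k).[d%:R] = egf_coef (moment_gf K d) k.
Proof.
move=> kK; rewrite egf_coef_moment_gf // /Epoly hornerZ horner_sum; congr (_ * _).
apply: eq_bigr => j _; rewrite hornerZ binpoly_nat addn2 mulrC; congr (_ * _).
have trunc_h : 'X^(k.+1) %| (texpm1_div K - 1) - (texpm1_div k.+1 - 1).
  by rewrite opprB addrA subrK dvdXn_poly_sub.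
have trunc_em : 'X^(k.+1) %| texp K (-1) - texp k.+1 (-1 : rat) by exact: dvdXn_poly_sub.
have /dvdXnP/(_ k (ltnSn k)) := dvdp_subMM (dvdp_subXX j trunc_h) trunc_em.
by rewrite coefB => /eqP; rewrite subr_eq0 => /eqP.
Qed.

Lemma size_Epoly k : size (Epoly k) = k.+1.
Proof.
set c := fun j => ((texpm1_div k.+1 - 1) ^+ j * texp k.+1 (-1))`_k.
have ck_neq0 : c k != 0.
  rewrite /c coef_expr_mul_eq; last by rewrite coefB coef1 coef0_texpm1_div ?subrr.
  rewrite coef_poly /= mulf_neq0 // expf_eq0 coefB coef1 coef_poly /=.
  by case: k {c}.
rewrite /Epoly -/c size_scale ?natr_fact_neq0 // big_ord_recr /= addrC size_polyDl.
  by rewrite size_scale // size_binpoly.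
rewrite size_scale // size_binpoly ltnS.
apply: leq_trans (size_sum _ _ _) _; apply/bigmax_leqP => j _.
by rewrite (leq_trans (size_scale_leq _ _)) // size_binpoly.
Qed.

Lemma moment_Epoly d k : (k <= d.+1)%N -> moment d k = (Epoly k).[d%:R].
Proof.
elim: d k => [|d IH] k kd.
  rewrite moment0 (Epoly_nat (K := 2)); last by case: k kd => [|[]].
  case: k kd => [|[|]] // _; rewrite /egf_coef /moment_gf expr2;
    by rewrite !coefM !big_ord_recr !big_ord0 /= !coefM !big_ord_recr !big_ord0 /= !coef_poly.
apply: (@mulfI _ d.+2%:R); first by rewrite pnatr_eq0.
rewrite moment_recurrence (Epoly_nat (K := (d + k).+3)) ?moment_gf_step; try lia.
apply: moment_step_agree => // j jd.
by rewrite IH // (Epoly_nat (K := (d + k).+3)) //; lia.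
Qed.

Lemma Epoly_fps k d :
  (Epoly k).[d%:R] / k`!%:R = fps_mul (fps_exp fps_expm1_div_z (d + 2)) fps_exp_neg k.
Proof.
rewrite (Epoly_nat (K := k.+1)) // /egf_coef mulrC mulKf ?natr_fact_neq0 //.
have := dvdp_subMr (texp k.+1 (-1 : rat)) (poly_fps_exp k.+1 fps_expm1_div_z (d + 2)).
move=> /(dvdp_sub_trans (poly_fps_mul _ _ fps_exp_neg)) /dvdXnP/(_ k (ltnSn k)).
by rewrite coefB coef_poly ltnSn addn2 => /eqP; rewrite subr_eq0 => /eqP.
Qed.

Lemma Eprime_nat K k d : (k < K)%N ->
  (Eprime Epoly k).[d%:R] = egf_coef ((texpm1_div K * texp K (- 2^-1)) ^+ d.+2) k.
Proof.
move=> kK; set c : rat := - 2^-1 * d%:R.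
have gf_cong : 'X^K %| (texpm1_div K * texp K (- 2^-1)) ^+ d.+2 - moment_gf K d * texp K c.
  rewrite exprMn /moment_gf -mulrA; apply: dvdp_subMl.
  apply: dvdp_sub_trans (texpMn _ _ _) _.
  rewrite (_ : d.+2%:R * - 2^-1 = -1 + c); last by rewrite /c -[d.+2]addn2 natrD; field.
  by rewrite -dvdpNr opprB texpD.
have /dvdXnP/(_ k kK)/eqP := gf_cong; rewrite coefB subr_eq0 => /eqP.
rewrite /egf_coef => ->; rewrite -/(egf_coef _ k) egf_coef_mul_texp // /Eprime horner_sum.
apply: eq_bigr => i _; rewrite hornerZ hornerM (Epoly_nat (K := K)); last first.
  exact: leq_ltn_trans (leq_ord i) kK.
by rewrite horner_exp hornerZ hornerX /c; ring.
Qed.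

Lemma Eprime_conv a b k :
  (Eprime Epoly k).[(a + b + 2)%:R]
  = \sum_(i < k.+1) 'C(k, i)%:R * (Eprime Epoly i).[a%:R] * (Eprime Epoly (k - i)).[b%:R].
Proof.
rewrite (Eprime_nat (K := k.+1)) // (_ : (a + b + 2).+2 = a.+2 + b.+2)%N; last lia.
rewrite exprD egf_coefM; apply: eq_bigr => i _.
by rewrite !(Eprime_nat (K := k.+1)) // ltnS ?leq_subr ?leq_ord.
Qed.

Theorem theorem3p10 :
  exists E : nat -> {poly rat},
    (forall k : nat, size (E k) = k.+1) /\
    (forall k d : nat, (k <= d.+1)%N -> moment d k = (E k).[d%:R]) /\
    (forall k d : nat,
        (E k).[d%:R] / (k`!)%:R
        = fps_mul (fps_exp fps_expm1_div_z (d + 2)) fps_exp_neg k) /\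
    (forall a b k : nat,
        (Eprime E k).[(a + b + 2)%:R]
        = \sum_(i < k.+1) ('C(k, i))%:R * (Eprime E i).[a%:R]
                                       * (Eprime E (k - i)).[b%:R]).
Proof.
exists Epoly; split; first exact: size_Epoly.
split; first by move=> k d; apply: moment_Epoly.
split; first exact: Epoly_fps.
exact: Eprime_conv.
Qed.
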